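(* For $a>0$ and $y>1$ let $\bar F(y,a)=y^{\sqrt a}\exp\!\big(-a(y^{1/\sqrt a}-1)\big)$. Then for every fixed $y>1$, the map $a\mapsto \bar F(y,a)$ is strictly increasing on $(0,\infty)$. Equivalently, if $Y_a=(1+X_a)^{\sqrt a}$ where $X_a$ has density $a t\,e^{-a t}(1+t)^{a-1}$ on $t>0$, then the family $\{Y_a\}_{a>0}$ is strictly increasing in the usual stochastic order: $\Pr\{Y_a>y\}<\Pr\{Y_b>y\}$ for all $y>1$ whenever $0<a<b$. *)

From Stdlib Require Import Reals.
Open Scope R_scope.

Definition Fbar (y a : R) : R :=
  Rpower y (sqrt a) * exp (- a * (Rpower y (/ sqrt a) - 1)).

(* Put L = ln y > 0 and u = L / sqrt a.  Since y^(sqrt a) = exp (L^2 / u) and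
   a (y^(1/sqrt a) - 1) = L^2 (e^u - 1) / u^2, we get
       ln Fbar(y, a) = L^2 * g u,   where  g u = (1 + u - e^u) / u^2.
   As a increases, u decreases; so it suffices that g is strictly decreasing
   on (0, +oo).  Its derivative is g' u = h u / u^3 with
       h u = 2 e^u - 2 - u - u e^u,   h' u = e^u (1 - u) - 1,   h'' u = - u e^u,
   and h(0) = h'(0) = 0, so h'' < 0 on (0, +oo) forces h' < 0 and then h < 0.
   Every one of these sign arguments is an instance of a single mean-value
   fact: a function with negative derivative on an interval strictly decreases
   across it. *)

From Stdlib Require Import Reals Lra.
From Coquelicot Require Import Coquelicot.
Open Scope R_scope.

Lemma strict_decrease_of_neg_derivative (f f' : R -> R) (lo hi : R) :
  lo < hi ->
  (forall t, lo <= t <= hi -> derivable_pt_lim f t (f' t)) ->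
  (forall t, lo < t < hi -> f' t < 0) ->
  f hi < f lo.
Proof.
intros Hlohi Hder Hneg.
destruct (MVT_cor2 f f' lo hi Hlohi Hder) as [c [Hmvt Hc]].
assert (Hc' : f' c < 0) by (apply Hneg; exact Hc).
nra.
Qed.

Definition h1 (u : R) : R := exp u * (1 - u) - 1.

Definition h (u : R) : R := 2 * exp u - 2 - u - u * exp u.

Definition g (u : R) : R := (1 + u - exp u) / u ^ 2.

(* h1 vanishes at 0 and has derivative - u e^u, hence is negative on (0, +oo). *)
Lemma h1_neg (u : R) : 0 < u -> h1 u < 0.
Proof.
intros Hu.
cut (h1 u < h1 0); [unfold h1 at 2; rewrite exp_0; lra|].
apply (strict_decrease_of_neg_derivative h1 (fun t => - t * exp t)); [lra| |].
- intros t _; apply is_derive_Reals; unfold h1; auto_derive; [easy | ring].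
- intros t Ht.
  assert (0 < t * exp t) by (apply Rmult_lt_0_compat; [lra | apply exp_pos]).
  lra.
Qed.

(* h vanishes at 0 and has derivative h1 < 0, hence is negative on (0, +oo). *)
Lemma h_neg (u : R) : 0 < u -> h u < 0.
Proof.
intros Hu.
cut (h u < h 0); [unfold h at 2; rewrite exp_0; lra|].
apply (strict_decrease_of_neg_derivative h h1); [lra| |].
- intros t _; apply is_derive_Reals; unfold h, h1; auto_derive; [easy | ring].
- intros t Ht; apply h1_neg; lra.
Qed.

(* g' u = h u / u^3 < 0 on (0, +oo): g is strictly decreasing there. *)
Lemma g_strictly_decreasing (u v : R) : 0 < u -> u < v -> g v < g u.
Proof.
intros Hu Huv.
apply (strict_decrease_of_neg_derivative g (fun t => h t / t ^ 3)); [lra| |].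
- intros t Ht; apply is_derive_Reals; unfold g, h; auto_derive.
  + assert (0 < t * t) by (apply Rmult_lt_0_compat; lra); lra.
  + field; lra.
- intros t Ht.
  assert (Hh : h t < 0) by (apply h_neg; lra).
  assert (Ht3 : 0 < / t ^ 3) by (apply Rinv_0_lt_compat, pow_lt; lra).
  unfold Rdiv; nra.
Qed.

Lemma Fbar_as_exp (y a : R) : 1 < y -> 0 < a ->
  Fbar y a = exp ((ln y) ^ 2 * g (ln y / sqrt a)).
Proof.
intros Hy Ha. unfold Fbar, Rpower.
assert (Hs : 0 < sqrt a) by (apply sqrt_lt_R0; lra).
assert (HL : 0 < ln y) by (rewrite <- ln_1; apply ln_increasing; lra).
rewrite <- exp_plus; f_equal.
replace (/ sqrt a * ln y) with (ln y / sqrt a) by (field; lra).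
pattern a at 2; rewrite <- (sqrt_sqrt a) by lra.
unfold g; field; lra.
Qed.

Theorem mainTheorem5 :
  forall y : R, 1 < y ->
  forall a b : R, 0 < a -> a < b -> Fbar y a < Fbar y b.
Proof.
intros y Hy a b Ha Hab.
assert (HL : 0 < ln y) by (rewrite <- ln_1; apply ln_increasing; lra).
assert (Hsa : 0 < sqrt a) by (apply sqrt_lt_R0; lra).
assert (Hsab : sqrt a < sqrt b) by (apply sqrt_lt_1; lra).
assert (Hub : 0 < ln y / sqrt b) by (apply Rdiv_lt_0_compat; lra).
assert (Huba : ln y / sqrt b < ln y / sqrt a).
{ apply Rmult_lt_compat_l; [lra|]. apply Rinv_lt_contravar; nra. }
rewrite !Fbar_as_exp by lra.
apply exp_increasing, Rmult_lt_compat_l; [apply pow_lt; lra|].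
now apply g_strictly_decreasing.
Qed.
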